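(* For any continuous function $f:\mathrm{SO}(2)\to\mathbb{R}$, there exists a rotation $R\in\mathrm{SO}(2)$ such that the rotation of angle $f(R)$ differs from $R$ by a rotation of angle $\pi$, i.e. $\rho(f(R))R^{-1}=\rho(\pi)$.
   Context: For $\theta\in\mathbb{R}$, $\rho(\theta)=\begin{bmatrix}\cos\theta&-\sin\theta\\ \sin\theta&\cos\theta\end{bmatrix}\in\mathrm{SO}(2)$ denotes the rotation of angle $\theta$. *)

From HB Require Import structures.
From mathcomp Require Import all_boot all_order all_algebra.
From mathcomp Require Import all_classical all_reals all_analysis.
Set Implicit Arguments. Unset Strict Implicit. Unset Printing Implicit Defensive.
Import Order.TTheory GRing.Theory Num.Theory.
Import numFieldNormedType.Exports.
Local Open Scope ring_scope.
Local Open Scope classical_set_scope.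

Definition rho (R : realType) (t : R) : 'M[R]_2 :=
  \matrix_(i < 2, j < 2)
    (if (val i == 0%N) && (val j == 0%N) then cos t
     else if (val i == 0%N) then - sin t
     else if (val j == 0%N) then sin t
     else cos t).

Definition SO2 (R : realType) : set 'M[R]_2 :=
  [set M | M^T *m M = 1%:M /\ \det M = 1].
Arguments SO2 R : clear implicits.

From HB Require Import structures.
From mathcomp Require Import all_boot all_order all_algebra.
From mathcomp Require Import all_classical all_reals all_analysis.
From mathcomp Require Import lra.
Import Order.TTheory GRing.Theory Num.Theory.
Import numFieldNormedType.Exports.
Local Open Scope ring_scope.
Local Open Scope classical_set_scope.

(* Restrict f to the rotations rho s.  Since s |-> f (rho s) is 2pi-periodic,
   g s := f (rho s) - pi - s drops by exactly 2pi over one period, so by the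
   intermediate value theorem g takes a value 2pi n at some s.  There
   rho (f (rho s)) = rho (pi + s) = rho pi * rho s. *)

Lemma periodicz {U V : zmodType} {f : U -> V} {T : U} :
  periodic f T -> forall (n : int) (a : U), f (a + T *~ n) = f a.
Proof.
move=> fT [] n a; first exact: periodicn.
by rewrite NegzE mulrNz -[in RHS](subrK (T *+ n.+1) a) periodicn.
Qed.

Lemma continuous_comp_within {S T U : topologicalType} {A : set T}
    {h : S -> T} {f : T -> U} :
  continuous h -> (forall s, A (h s)) -> {within A, continuous f} ->
  continuous (f \o h).
Proof.
move=> hc hA /subspace_continuousP fc s P /(fc _ (hA s)) /hc.
by rewrite !nbhs_simpl /=; apply: filterS => y; apply; exact: hA.
Qed.

Lemma mulz_in_itv {R : archiRealFieldType} (T a b : R) :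
  0 < T -> a + T <= b -> exists n : int, a <= T *~ n <= b.
Proof.
move=> T0 abT; exists (Num.floor (b / T)); rewrite -mulrzr.
have /andP[fl fu] := floor_itv (b / T); rewrite intrD in fu.
apply/andP; split.
- have : b < T * ((Num.floor (b / T))%:~R + 1).
    by rewrite -ltr_pdivrMl // mulrC.
  by rewrite mulrDr mulr1; lra.
- by rewrite mulrC -ler_pdivlMr.
Qed.

Lemma IVT_mulz {R : realType} (g : R -> R) (T a b : R) :
  0 < T -> a <= b -> {within `[a, b], continuous g} -> g b + T <= g a ->
  exists t (n : int), g t = T *~ n.
Proof.
move=> T0 ab gc gba.
have [n /andP[nlo nhi]] := mulz_in_itv _ _ _ T0 gba.
have [|t _ gt] := IVT ab gc (v := T *~ n).
  by rewrite ge_min le_max nlo nhi orbT.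
by exists t, n.
Qed.

Section rotations.
Variable R : realType.
Implicit Types a b t : R.

Lemma rho_cos_sin t : rho t = cos t *: 1%:M + sin t *: rho (pi / 2).
Proof.
apply/matrixP => i j; rewrite !mxE cos_pihalf sin_pihalf.
by case: i => [[|[|i]] ?] //; case: j => [[|[|j]] ?] //=; lra.
Qed.

Lemma rho0 : rho 0 = 1%:M :> 'M[R]_2.
Proof.
apply/matrixP => i j; rewrite !mxE cos0 sin0 oppr0.
by case: i => [[|[|i]] ?] //; case: j => [[|[|j]] ?].
Qed.

Lemma rhoD a b : rho a *m rho b = rho (a + b).
Proof.
apply/matrixP => i j; rewrite !mxE !big_ord_recr big_ord0 /= !mxE add0r.
by case: i => [[|[|i]] ?] //; case: j => [[|[|j]] ?] //=; rewrite ?cosD ?sinD; lra.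
Qed.

Lemma trmx_rho t : (rho t)^T = rho (- t).
Proof.
apply/matrixP => i j; rewrite !mxE cosN sinN opprK.
by case: i => [[|[|i]] ?] //; case: j => [[|[|j]] ?].
Qed.

Lemma det_rho t : \det (rho t) = 1.
Proof.
rewrite (expand_det_row _ ord0) !big_ord_recr big_ord0 /= add0r.
rewrite /cofactor !det_mx11 !mxE /=.
by have := cos2Dsin2 t; rewrite expr0 expr1; lra.
Qed.

Lemma rho_SO2 t : SO2 R (rho t).
Proof. by split; [rewrite trmx_rho rhoD addNr rho0 | exact: det_rho]. Qed.

Lemma unitmx_rho t : rho t \in unitmx.
Proof. by rewrite unitmxE det_rho unitr1. Qed.

Lemma rhoDK a b : rho (a + b) *m invmx (rho b) = rho a.
Proof. by rewrite -rhoD mulmxK // unitmx_rho. Qed.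

Lemma rho_periodic : periodic (@rho R) (pi *+ 2).
Proof. by move=> t; apply/matrixP => i j; rewrite !mxE cosD2pi sinD2pi. Qed.

Lemma continuous_rho : continuous (@rho R).
Proof.
rewrite (funext rho_cos_sin) => t.
by apply: (continuousD (f := fun t => cos t *: 1%:M)
                      (g := fun t => sin t *: rho (pi / 2)));
  [apply/continuousZr_tmp/continuous_cos | apply/continuousZr_tmp/continuous_sin].
Qed.

End rotations.

Theorem theorem3 (R : realType) (f : 'M[R]_2 -> R)
  (hf : {within SO2 R, continuous f}) :
  exists M : 'M[R]_2, SO2 R M /\ rho (f M) *m invmx M = rho pi.
Proof.
pose g s := f (rho s) - pi - s.
have gc : continuous g.
  have frho_c := continuous_comp_within (@continuous_rho R) (@rho_SO2 R) hf.
  by move=> t; apply: cvgB; [apply: cvgB; [exact: frho_c | exact: cvg_cst] | exact: cvg_id].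
have g2pi : g (pi *+ 2) + pi *+ 2 = g 0.
  by rewrite /g -[pi *+ 2]add0r rho_periodic; lra.
have [t [n gt]] : exists t (n : int), g t = pi *+ 2 *~ n.
  apply: (IVT_mulz g (pi *+ 2) 0 (pi *+ 2)).
  - by rewrite mulrn_wgt0 // pi_gt0.
  - by rewrite mulrn_wge0 // pi_ge0.
  - exact: continuous_subspaceT.
  - by rewrite g2pi.
exists (rho t); split; first exact: rho_SO2.
have -> : f (rho t) = (pi + t) + pi *+ 2 *~ n by rewrite -gt /g; lra.
by rewrite periodicz ?rhoDK //; exact: rho_periodic.
Qed.
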